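(* Let $H$ be a fixed graph and $s$ a fixed positive integer. Let $G$ be an $n$-vertex graph not containing $M_{s+1}$ (a matching of $s+1$ pairwise disjoint edges) as a subgraph, and let $B\subseteq V(G)$ be a set such that every connected component of $G-B$ has an odd number of vertices and, writing $A_1,\dots,A_m$ for the vertex sets of these components, $|B|+\sum_{i=1}^m \frac{|A_i|-1}{2}\le s$. Then, as $n\to\infty$ (with the implied constants depending only on $H$ and $s$): (i) every vertex $v\in V(G)\setminus B$ is contained in $O(n^{\alpha(H)-1})$ copies of $H$ in $G$; (ii) the number of copies of $H$ in $G$ that contain at least one edge with both endpoints outside $B$ is $O(n^{\alpha(H)-1})$.
   Context: All graphs are finite and simple. $\alpha(H)$ denotes the independence number of $H$ (the largest order of an independent set in $H$). A copy of $H$ in $G$ is a subgraph of $G$ isomorphic to $H$. By the Berge–Tutte theorem, a set $B$ as in the statement exists for every $M_{s+1}$-free graph $G$. *)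

From mathcomp Require Import all_boot.
Set Implicit Arguments. Unset Strict Implicit. Unset Printing Implicit Defensive.

Definition simple_graph (V : finType) (e : rel V) : Prop :=
  symmetric e /\ irreflexive e.

Definition indep (V : finType) (e : rel V) (S : {set V}) : bool :=
  [forall x in S, forall y in S, ~~ e x y].
Definition alpha (V : finType) (e : rel V) : nat :=
  \max_(S : {set V} | indep e S) #|S|.

Definition has_matching (V : finType) (e : rel V) (k : nat) : Prop :=
  exists (u w : 'I_k -> V),
    [/\ forall i, e (u i) (w i), injective u, injective w
      & forall i j, u i != w j].

(* A subgraph of G: a vertex set S and an edge set F (ordered pairs, stored
   symmetrically), with F contained in E(G) and edges having ends in S. *)
Definition is_copy (TH : finType) (eH : rel TH) (V : finType) (e : rel V)
    (p : {set V} * {set V * V}) : bool :=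
  let: (W, F) := p in
  [forall x in F, e x.1 x.2 && (x.1 \in W) && (x.2 \in W)] &&
  [exists f : {ffun TH -> V},
     [&& injectiveb f, W == [set f x | x in TH] &
         [forall x, forall y, eH x y == ((f x, f y) \in F)]]].

Definition copies (TH : finType) (eH : rel TH) (V : finType) (e : rel V) :=
  [set p : {set V} * {set V * V} | is_copy eH e p].

Definition del_rel (V : finType) (e : rel V) (B : {set V}) : rel V :=
  fun x y => [&& x \notin B, y \notin B & e x y].
Definition comps_minus (V : finType) (e : rel V) (B : {set V}) : {set {set V}} :=
  [set [set y | (y \notin B) && connect (del_rel e B) x y] | x in ~: B].

From mathcomp Require Import all_boot zify.
Set Implicit Arguments.
Unset Strict Implicit.
Unset Printing Implicit Defensive.

(* Outside [B], all but at most [3 s] vertices are isolated in [G - B]: an odd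
   component of size [m > 1] has [m >= 3], hence [m <= 3 (m - 1)/2].  Write a
   copy of [H] as the image of a homomorphism [f].  If [f z] lies outside [B],
   then [z] together with the vertices that [f] maps to isolated vertices of
   [G - B] (other than [f z]) is independent in [H], because an isolated
   vertex of [G - B] has no neighbour outside [B].  So at most [alpha(H) - 1]
   vertices of [H] are mapped to isolated vertices ([n] choices each) and the
   others go to the [O(s)] remaining vertices.  A copy with an edge
   [f x f y] outside [B] is handled in the same way with [z = x]. *)

Lemma odd_leq_3half m : odd m -> 1 < m -> m <= 3 * m.-1./2.
Proof.
move=> odd_m; move: (odd_double_half m); rewrite odd_m => <-.
rewrite add1n succnK doubleK -muln2; lia.
Qed.

Section GraphMinus.
Variables (V : finType) (e : rel V) (B : {set V}).

Definition isolated_minus : {set V} :=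
  [set x | (x \notin B) && [forall y, ~~ del_rel e B x y]].

Lemma not_isolated_minus_sub : irreflexive e ->
  ~: isolated_minus \subset B :|: cover [set A in comps_minus e B | 1 < #|A|].
Proof.
move=> irr_e; apply/subsetP => x; rewrite !inE negb_and negbK.
case: (boolP (x \in B)) => //= xB /existsP [y]; rewrite negbK => exy.
pose A := [set y | (y \notin B) && connect (del_rel e B) x y].
apply/bigcupP; exists A; last by rewrite inE xB connect0.
have x_neq_y : x != y by apply: contraTneq exy => <-; rewrite /del_rel irr_e !andbF.
have xy_subA : [set x; y] \subset A.
  apply/subsetP => w; rewrite !inE => /orP [] /eqP ->; first by rewrite xB connect0.
  by case/and3P: (exy) => _ -> _; rewrite connect1.
rewrite inE; apply/andP; split; first by apply/imsetP; exists x; rewrite ?inE.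
by apply: leq_trans (subset_leq_card xy_subA); rewrite cards2 x_neq_y.
Qed.

Lemma card_not_isolated_minus : irreflexive e ->
  (forall A, A \in comps_minus e B -> odd #|A|) ->
  #|~: isolated_minus| <= 3 * (#|B| + \sum_(A in comps_minus e B) (#|A|).-1./2).
Proof.
move=> irr_e odd_comps.
set P := [set A in comps_minus e B | 1 < #|A|].
have card_coverP : #|cover P| <= 3 * \sum_(A in comps_minus e B) (#|A|).-1./2.
  apply: (leq_trans (leq_card_cover P)).
  rewrite big_distrr /= big_mkcond [X in _ <= X]big_mkcond /=.
  apply: leq_sum => A _; rewrite inE.
  case: (boolP (A \in comps_minus e B)) => //= compA.
  by case: ifP => // big_A; apply: odd_leq_3half (odd_comps _ compA) big_A.
apply: leq_trans (subset_leq_card (not_isolated_minus_sub irr_e)) _.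
by apply: leq_trans (leq_card_setU _ _) _; rewrite -/P; lia.
Qed.

End GraphMinus.

Section CountingMaps.
Variables (TH V : finType) (eH : rel TH).

Lemma indep_leq_alpha S : indep eH S -> #|S| <= alpha eH.
Proof.
by move=> indS; rewrite /alpha (@leq_bigmax_cond _ (indep eH) (fun S => #|S|)).
Qed.

Lemma card_ffun_trace (Free : {set V}) (I : {set TH}) M : #|~: Free| <= M ->
  #|[set g : {ffun TH -> V} | [set x | g x \in Free] == I]|
    <= #|V| ^ #|I| * M ^ #|~: I|.
Proof.
move=> coFree_leM.
pose F x := if x \in I then [set: V] else ~: Free.
have sub_family : [set g : {ffun TH -> V} | [set x | g x \in Free] == I]
    \subset family F.
  apply/subsetP => g; rewrite inE => /eqP traceI; apply/familyP => x.
  rewrite /F; case: ifP => xI; first by rewrite inE.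
  by rewrite inE; move: xI; rewrite -traceI inE => ->.
apply: leq_trans (subset_leq_card sub_family) _.
rewrite card_family foldrE big_image /=.
apply: (@leq_trans (\prod_x (if x \in I then #|V| else M))).
  by apply: leq_prod => x _; rewrite /F; case: ifP; rewrite ?cardsT.
rewrite (bigID (mem I)) /= -!prod_nat_const; apply: leq_mul.
  by apply: eq_leq; apply: eq_bigr => x ->.
by apply: eq_leq; apply: eq_big => [x|x /negbTE ->]; rewrite ?inE.
Qed.

Definition anchored_maps (Free : {set V}) : {set {ffun TH -> V}} :=
  [set g : {ffun TH -> V} |
    [exists z, (g z \notin Free) && indep eH (z |: [set x | g x \in Free])]].

Lemma card_anchored_maps (Free : {set V}) M : #|~: Free| <= M ->
  #|anchored_maps Free| * #|V| <= #|{set TH}| * M ^ #|TH| * #|V| ^ alpha eH.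
Proof.
move=> coFree_leM; set n := #|V|.
rewrite -sum1_card (partition_big (fun g : {ffun TH -> V} => [set x | g x \in Free])
  predT) //= big_distrl -mulnA -sum_nat_const /=.
apply: leq_sum => I _; rewrite sum1_card.
case: (pickP [pred g | (g \in anchored_maps Free) && ([set x | g x \in Free] == I)])
  => [g0 | no_map]; last by rewrite (eq_card0 no_map).
rewrite /= inE => /andP [/existsP [z /andP [g0z_free indep_z]] /eqP traceI].
have I_lt_alpha : #|I| < alpha eH.
  by move/indep_leq_alpha: indep_z; rewrite cardsU1 -traceI inE g0z_free.
have M_gt0 : 0 < M.
  by apply: leq_trans coFree_leM; apply/card_gt0P; exists (g0 z); rewrite inE.
have n_gt0 : 0 < n by apply/card_gt0P; exists (g0 z).
have T_sub : [pred g | (g \in anchored_maps Free) && ([set x | g x \in Free] == I)]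
    \subset [set g : {ffun TH -> V} | [set x | g x \in Free] == I].
  by apply/subsetP => g /andP [_]; rewrite inE.
apply: (leq_trans (leq_mul (subset_leq_card T_sub) (leqnn n))).
apply: leq_trans (leq_mul (card_ffun_trace I coFree_leM) (leqnn n)) _.
rewrite mulnAC -expnSr mulnC.
by apply: leq_mul; apply: leq_pexp2l => //; apply: max_card.
Qed.

End CountingMaps.

Section CopiesOutsideB.
Variables (TH V : finType) (eH : rel TH) (e : rel V) (B : {set V}).
Hypotheses (sym_eH : symmetric eH) (irr_eH : irreflexive eH).

Definition copy_of (f : {ffun TH -> V}) : {set V} * {set V * V} :=
  ([set f x | x in TH],
   [set q | [exists x, exists y, eH x y && (q == (f x, f y))]]).

Lemma copy_ofP p : p \in copies eH e ->
  exists2 f, p = copy_of f & {homo f : x y / eH x y >-> e x y}.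
Proof.
case: p => W F; rewrite inE => /andP [/forallP F_edges].
case/existsP => f /and3P [_ /eqP defW /forallP edges_f].
have defF x y : eH x y = ((f x, f y) \in F) by apply/eqP/(forallP (edges_f x)).
exists f; last first.
  move=> x y; rewrite defF => Fxy.
  by move: (F_edges (f x, f y)); rewrite Fxy => /andP [/andP []].
congr pair => //; apply/setP => q; rewrite inE; apply/idP/existsP.
  case: q => a b Fab; move: (F_edges (a, b)); rewrite Fab /= => /andP [/andP [_]].
  rewrite defW => /imsetP [x _ defa] /imsetP [y _ defb]; subst a b.
  by exists x; apply/existsP; exists y; rewrite defF Fab eqxx.
by case=> x /existsP [y /andP [eHxy /eqP ->]]; rewrite -defF.
Qed.

Lemma leq_card_sub_copies (Free : {set V}) M (S : {set {set V} * {set V * V}}) :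
  S \subset copy_of @: anchored_maps eH Free -> #|~: Free| <= M ->
  #|S| * #|V| <= #|{set TH}| * M ^ #|TH| * #|V| ^ alpha eH.
Proof.
move=> S_sub coFree_leM; apply: leq_trans (card_anchored_maps eH coFree_leM).
by rewrite leq_mul2r (leq_trans (subset_leq_card S_sub)) ?leq_imset_card ?orbT.
Qed.

Lemma hom_indep_isolated (f : TH -> V) (Free : {set V}) z :
  {homo f : x y / eH x y >-> e x y} -> Free \subset isolated_minus e B ->
  f z \notin B -> indep eH (z |: [set x | f x \in Free]).
Proof.
move=> hom_f Free_iso fz_notB.
have iso_notB u : u \in isolated_minus e B -> u \notin B by rewrite inE => /andP [].
have no_edge x y : f x \in isolated_minus e B -> f y \notin B -> ~~ eH x y.
  move=> iso_fx fy_notB; apply: contraT; rewrite negbK => /hom_f efxy.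
  move: (iso_fx); rewrite inE => /andP [_ /forallP /(_ (f y))].
  by rewrite /del_rel (iso_notB _ iso_fx) fy_notB efxy.
have memS x : x \in z |: [set x | f x \in Free] ->
    (x == z) || (f x \in isolated_minus e B).
  by rewrite in_setU1 inE => /orP [-> // | /(subsetP Free_iso) ->]; rewrite orbT.
have notB x : x \in z |: [set x | f x \in Free] -> f x \notin B.
  by move/memS => /orP [/eqP -> // | /iso_notB].
apply/forallP => x; apply/implyP => Sx; apply/forallP => y; apply/implyP => Sy.
case/orP: (memS x Sx) => [/eqP xz | iso_fx]; last exact: no_edge iso_fx (notB _ Sy).
case/orP: (memS y Sy) => [/eqP yz | iso_fy]; first by rewrite xz yz irr_eH.
by rewrite sym_eH; apply: no_edge iso_fy (notB _ Sx).
Qed.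

Lemma copies_through_sub v : v \notin B ->
  [set p in copies eH e | v \in p.1]
    \subset copy_of @: anchored_maps eH (isolated_minus e B :\ v).
Proof.
move=> v_notB; apply/subsetP => p; rewrite inE => /andP [/copy_ofP [f -> hom_f]].
case/imsetP => z _ defv; apply: imset_f.
rewrite inE; apply/existsP; exists z; rewrite -defv !inE eqxx /=.
by apply: hom_indep_isolated; rewrite -?defv ?subsetDl.
Qed.

Lemma copies_edge_outside_sub :
  [set p in copies eH e | [exists q in p.2, (q.1 \notin B) && (q.2 \notin B)]]
    \subset copy_of @: anchored_maps eH (isolated_minus e B).
Proof.
apply/subsetP => p; rewrite inE => /andP [/copy_ofP [f -> hom_f]].
case/existsP => q /and3P [/= ]; rewrite inE.
case/existsP => x /existsP [y /andP [eHxy /eqP -> /=]] fx_notB fy_notB.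
apply: imset_f; rewrite inE; apply/existsP; exists x; apply/andP; split.
  rewrite inE negb_and fx_notB /=; apply/existsP; exists (f y).
  by rewrite negbK /del_rel fx_notB fy_notB hom_f.
exact: hom_indep_isolated.
Qed.

End CopiesOutsideB.

Theorem mainTheorem1 :
  forall (TH : finType) (eH : rel TH), simple_graph eH ->
  forall s : nat, 0 < s ->
  exists C N : nat, forall n : nat, N <= n ->
  forall e : rel 'I_n, simple_graph e -> ~ has_matching e s.+1 ->
  forall B : {set 'I_n},
    (forall A, A \in comps_minus e B -> odd #|A|) ->
    #|B| + \sum_(A in comps_minus e B) (#|A|).-1./2 <= s ->
    (forall v, v \notin B ->
       #|[set p in copies eH e | v \in p.1]| * n <= C * n ^ alpha eH)
    /\ #|[set p in copies eH e |
          [exists x in p.2, (x.1 \notin B) && (x.2 \notin B)]]| * n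
         <= C * n ^ alpha eH.
Proof.
move=> TH eH [sym_eH irr_eH] s _.
exists (#|{set TH}| * (3 * s).+1 ^ #|TH|), 0 => n _ e [_ irr_e].
(* [M_(s+1)]-freeness only guarantees that such a [B] exists; the bounds use
   [B] alone. *)
move=> _ B odd_comps sum_le_s.
have card_coL : #|~: isolated_minus e B| <= 3 * s.
  apply: leq_trans (card_not_isolated_minus irr_e odd_comps) _.
  by rewrite leq_mul2l sum_le_s orbT.
split=> [v v_notB|];
  rewrite -[X in _ * X <= _](card_ord n) -[X in _ * X ^ _]card_ord.
- apply: leq_card_sub_copies (copies_through_sub e sym_eH irr_eH v_notB) _.
  by rewrite setCD (leq_trans (leq_card_setU _ _)) // cards1 addn1.
- apply: leq_card_sub_copies (copies_edge_outside_sub e B sym_eH irr_eH) _.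
  exact: leqW card_coL.
Qed.
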